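(* Let $(N,M_0)$ be a three-level PT-net system with transitions $T$ partitioned into low-level $L$, downgrading $D$ and high-level $H$. Then $(N,M_0)$ has the property INI if and only if $(N\setminus D,M)\sim(N\setminus(H\cup D),M)$ for $M=M_0$ and for every marking $M$ such that $M_0[\upsilon d\rangle M$ in $N$ for some $\upsilon\in T^*$ and $d\in D$.
   Context: A PT-net is $N=(P,T,F)$ with $P,T$ finite disjoint and $F:(P\times T)\cup(T\times P)\to\mathbb{N}$; markings $M:P\to\mathbb{N}$; $t$ enabled at $M$ ($M[t\rangle$) iff $M(p)\ge F(p,t)$ for all $p$, firing gives $M'(p)=M(p)+F(t,p)-F(p,t)$; extended to sequences. $N\setminus T'$ deletes the transitions of $T'$. For net systems whose transitions are split into observable low-level $L$ and unobservable high-level ones, the language is the set of projections onto $L^*$ of all firing sequences from the initial marking; $\sim$ (language equivalence) means equal languages. In $(N\setminus D,M)$ the transitions of $L$ are low-level and those of $H$ are high-level; in $(N\setminus(H\cup D),M)$ all transitions are low-level. For two-level systems with disjoint place sets, $\mathcal{N}_1|\mathcal{N}_2$ has the union of places, the union of transitions (shared transitions synchronize, arcs inherited from each component on its own places), and union of initial markings; a high-level net system has only high-level transitions. A two-level system $\mathcal{N}$ (low $L$, high $H$) has NDC iff for every high-level net system $\mathcal{N}'$ (places disjoint from those of $\mathcal{N}$) with transition set $H'$ disjoint from $L$, $\mathcal{N}\setminus H\sim(\mathcal{N}|\mathcal{N}')\setminus(H\setminus H')$. The three-level system $(N,M_0)$ has INI iff the two-level system $(N\setminus D,M)$ has NDC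 for $M=M_0$ and for every marking $M$ with $M_0[\upsilon d\rangle M$ in $N$ for some $\upsilon\in T^*$, $d\in D$. *)

From mathcomp Require Import all_boot.
Set Implicit Arguments. Unset Strict Implicit. Unset Printing Implicit Defensive.

(* A PT-net N = (P, T, F): finite place type P, finite transition set T
   (a subset of the universe X of transition names), arc weights
   F(p,t) = pre p t and F(t,p) = post p t. *)
Record net (X : finType) := Net {
  place : finType;
  trans : {set X};
  pre : place -> X -> nat;
  post : place -> X -> nat }.
Arguments Net {X} place trans pre post.
Arguments place {X} _.
Arguments trans {X} _.
Arguments pre {X} _ _ _.
Arguments post {X} _ _ _.

Definition marking (X : finType) (N : net X) := place N -> nat.

Section Nets.
Variable X : finType.

Definition enabled (N : net X) (M : marking N) (t : X) : Prop :=
  t \in trans N /\ forall p, pre N p t <= M p.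

Definition fire (N : net X) (M : marking N) (t : X) : marking N :=
  fun p => M p + post N p t - pre N p t.

Inductive fires (N : net X) : marking N -> seq X -> marking N -> Prop :=
  | fires_nil M : fires M [::] M
  | fires_cons M t s M' : enabled M t -> fires (fire M t) s M' ->
      fires M (t :: s) M'.

Definition restrict (N : net X) (T' : {set X}) : net X :=
  Net (place N) (trans N :\: T') (pre N) (post N).

Definition lang (N : net X) (M : marking N) (Obs : {set X}) (w : seq X) : Prop :=
  exists s M', fires M s M' /\ w = [seq t <- s | t \in Obs].

Definition lang_equiv (N1 : net X) (M1 : marking N1) (O1 : {set X})
  (N2 : net X) (M2 : marking N2) (O2 : {set X}) : Prop :=
  forall w, lang M1 O1 w <-> lang M2 O2 w.

(* Parallel composition N1 | N2 (disjoint places via a sum type; shared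
   transitions synchronize; arcs inherited from each component on its own
   places). *)
Definition comp (N1 N2 : net X) : net X :=
  Net (place N1 + place N2)%type (trans N1 :|: trans N2)
    (fun q t => match q with
                | inl p => if t \in trans N1 then pre N1 p t else 0
                | inr p => if t \in trans N2 then pre N2 p t else 0 end)
    (fun q t => match q with
                | inl p => if t \in trans N1 then post N1 p t else 0
                | inr p => if t \in trans N2 then post N2 p t else 0 end).

Definition comp_marking (N1 N2 : net X) (M1 : marking N1) (M2 : marking N2)
  : marking (comp N1 N2) :=
  fun q => match q with inl p => M1 p | inr p => M2 p end.

(* NDC for the two-level system (N, M) with low-level transitions L and
   high-level transitions H:  for every high-level net system (N', M')
   (all transitions high, H' = trans N', H' disjoint from L),
   N \ H  ~  (N | N') \ (H \ H'). *)
Definition NDC (N : net X) (M : marking N) (L H : {set X}) : Prop :=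
  forall (N' : net X) (M' : marking N'),
    [disjoint trans N' & L] ->
    lang_equiv (M : marking (restrict N H)) L
      (comp_marking M M' : marking (restrict (comp N N') (H :\: trans N'))) L.

Definition INI (N : net X) (M0 : marking N) (L D H : {set X}) : Prop :=
  NDC (M0 : marking (restrict N D)) L H /\
  forall (M : marking N) (u : seq X) (d : X), d \in D ->
    fires M0 (rcons u d) M -> NDC (M : marking (restrict N D)) L H.

End Nets.

From Pilot Require Import Defs.
From mathcomp Require Import all_boot.
From Stdlib Require Import FunctionalExtensionality.
Set Implicit Arguments. Unset Strict Implicit. Unset Printing Implicit Defensive.

(* For a fixed marking, NDC of (N \ D, M) already follows from its instance
   with the high-level net that has no places and exactly the transitions H:
   composing with it merely lifts the restriction to H, so that instance says
   N \ D \ H ~ N \ D.  Conversely, given that equivalence, a run of an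
   arbitrary composition N \ D | N' projects onto a run of N \ D with the same
   low-level trace (transitions of N' are never low-level), while a run of
   N \ D \ H uses only low-level transitions, which N' cannot block. *)

Section Nets.
Variable X : finType.
Implicit Types (N : net X) (K O : {set X}).

Lemma fires_restrictP N K (M : marking N) s M' :
  fires (M : marking (restrict N K)) s M' <->
  fires M s M' /\ {in s, forall t, t \notin K}.
Proof.
split.
- elim=> {M s M'} [M | M t s M' [+ hpre] _ [IHf IHs]].
    by split; [constructor |].
  rewrite inE => /andP [htK htN].
  split; first by constructor=> //; split.
  by move=> t'; rewrite inE => /predU1P [-> | /IHs].
- case; elim=> {M s M'} [M | M t s M' [htN hpre] _ IH] hs; first by constructor.
  constructor; first by split; rewrite // inE hs ?mem_head.
  by apply: IH => t' ht'; apply: hs; rewrite inE ht' orbT.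
Qed.

Lemma fires_trans N (M : marking N) s M' : fires M s M' -> {subset s <= trans N}.
Proof.
elim=> {M s M'} // M t s M' [htN _] _ IH t'.
by rewrite inE => /predU1P [-> | /IH].
Qed.

Lemma lang_restrict_restrict N K1 K2 (M : marking N) O w :
  lang (M : marking (restrict (restrict N K1) K2)) O w <->
  lang (M : marking (restrict N (K2 :|: K1))) O w.
Proof. by rewrite /restrict /= setDDl setUC. Qed.

Definition left_marking N1 N2 (Q : marking (Defs.comp N1 N2)) : marking N1 :=
  fun p => Q (inl p).

Lemma fires_comp_left N1 N2 (Q : marking (Defs.comp N1 N2)) s Q' :
  fires Q s Q' ->
  fires (left_marking Q) [seq t <- s | t \in trans N1] (left_marking Q').
Proof.
elim=> {Q s Q'} [Q | Q t s Q' [_ hpre] _ IH] /=; first by constructor.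
have fire_left : left_marking (fire Q t) =
    if t \in trans N1 then fire (left_marking Q) t else left_marking Q.
  apply: functional_extensionality => p; rewrite /left_marking /fire /=.
  by case: ifP; rewrite ?addn0 ?subn0.
rewrite fire_left in IH; case: ifP => htN1 in IH *; last exact: IH.
by constructor=> //; split=> // p; have := hpre (inl p); rewrite /= htN1.
Qed.

Lemma lang_comp_left N1 N2 K (M1 : marking N1) (M2 : marking N2) O w :
  [disjoint trans N2 & O] ->
  lang (comp_marking M1 M2 : marking (restrict (Defs.comp N1 N2) K)) O w ->
  lang M1 O w.
Proof.
move=> hdis [s [Q' [/fires_restrictP [hf _] ->]]].
exists [seq t <- s | t \in trans N1], (left_marking Q'); split.
  exact: fires_comp_left hf.
rewrite -filter_predI; apply: eq_in_filter => t hts /=.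
case: (boolP (t \in trans N1)) => [_ | htN1]; first by rewrite andbT.
have := fires_trans hf hts; rewrite inE (negbTE htN1) /= => htN2.
by rewrite (disjointFr hdis htN2).
Qed.

Lemma fires_comp_lift N1 N2 (M1 : marking N1) (M2 : marking N2) s M1' :
  fires M1 s M1' ->
  {in s, forall t, t \in trans N2 -> forall p, pre N2 p t = 0 /\ post N2 p t = 0} ->
  fires (comp_marking M1 M2 : marking (Defs.comp N1 N2)) s (comp_marking M1' M2).
Proof.
elim=> {M1 s M1'} [M1 | M1 t s M1' [htN hpre] _ IH] hs; first by constructor.
have neutral p : (if t \in trans N2 then pre N2 p t else 0) = 0 /\
                 (if t \in trans N2 then post N2 p t else 0) = 0.
  by case: ifP => // htN2; apply: hs (mem_head _ _) htN2 p.
constructor.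
  split; first by rewrite inE htN.
  by case=> p /=; rewrite ?htN ?(neutral p).1.
have -> : fire (comp_marking M1 M2 : marking (Defs.comp N1 N2)) t =
          comp_marking (fire M1 t) M2.
  apply: functional_extensionality; case=> p; rewrite /fire /= ?htN //.
  by rewrite (neutral p).1 (neutral p).2 addn0 subn0.
by apply: IH => t' ht'; apply: hs; rewrite inE ht' orbT.
Qed.

Lemma NDC_iff_lang_equiv N (M : marking N) (L H : {set X}) :
  {subset trans N :\: H <= L} -> [disjoint L & H] ->
  NDC M L H <-> lang_equiv (M : marking (restrict N H)) L M L.
Proof.
move=> hlow hLH; split=> [hndc w | heq N' M' hN'L w].
- pose Nvoid := Net void H (fun _ _ => 0) (fun _ _ => 0).
  have hHL : [disjoint trans Nvoid & L] by rewrite disjoint_sym.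
  have [to_comp of_comp] := hndc Nvoid (fun _ => 0) hHL w.
  split=> [/to_comp hw | [s [M1 [hf hw]]]]; first exact: lang_comp_left hw.
  apply: of_comp.
  exists s, (comp_marking M1 (fun _ => 0)); split=> //.
  apply/fires_restrictP; split; last by move=> t _; rewrite setDv inE.
  by apply: fires_comp_lift hf _ => t _ _; case.
- split=> [[s [M1 [hf ->]]] | hw]; last by apply/heq; exact: lang_comp_left hw.
  have /fires_restrictP [hfN hsH] := hf.
  have hsL : {subset s <= L}.
    by move=> t hts; apply: hlow; rewrite inE hsH ?(fires_trans hfN hts).
  exists s, (comp_marking M1 M'); split=> //.
  apply/fires_restrictP; split=> [|t hts];
    last by rewrite inE (negbTE (hsH t hts)) andbF.
  apply: fires_comp_lift hfN _ => t hts htN'.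
  by move: hN'L => /disjointFr /(_ htN'); rewrite hsL.
Qed.

End Nets.

Theorem lemma3 (X : finType) (N : net X) (M0 : marking N) (L D H : {set X})
  (hpart : trans N = L :|: D :|: H)
  (hLD : [disjoint L & D]) (hLH : [disjoint L & H]) (hDH : [disjoint D & H]) :
  INI M0 L D H <->
  (lang_equiv (M0 : marking (restrict N D)) L
              (M0 : marking (restrict N (H :|: D))) L /\
   forall (M : marking N) (u : seq X) (d : X), d \in D ->
     fires M0 (rcons u d) M ->
     lang_equiv (M : marking (restrict N D)) L
                (M : marking (restrict N (H :|: D))) L).
Proof.
have hlow : {subset trans (restrict N D) :\: H <= L}.
  move=> t; rewrite !inE hpart !inE => /and3P [/negbTE -> /negbTE ->].
  by rewrite !orbF.
have NDC_iff (M : marking N) :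
    NDC (M : marking (restrict N D)) L H <->
    lang_equiv (M : marking (restrict N D)) L
               (M : marking (restrict N (H :|: D))) L.
  have [to_equiv of_equiv] := NDC_iff_lang_equiv (M : marking (restrict N D)) hlow hLH.
  split=> [/to_equiv heq w | heq]; last apply: of_equiv => w;
    have := heq w; have := lang_restrict_restrict D H M L w; tauto.
split=> [[h0 h] | [h0 h]]; split=> [|M u d hd hf]; apply/NDC_iff => //; exact: h hf.
Qed.
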